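(* Let $\Omega$ be a topological Hausdorff space, $\mathcal{FV}(\Omega)$ a dom-space and $T\colon\mathcal{FV}(\Omega)\to\mathcal{C}(\Omega)$ linear. Then the map $\delta\circ T\colon\Omega\to\mathcal{FV}(\Omega)'_\gamma$, $x\mapsto\delta_x\circ T$, is well-defined and continuous in each of the following cases: (i) $\Omega$ is a $k_{\mathbb{R}}$-space and $T\colon\mathcal{FV}(\Omega)\to\mathcal{CW}(\Omega)$ is continuous; (ii) $T$ maps into $\mathcal{C}_b(\Omega)$ and $T\colon\mathcal{FV}(\Omega)\to\mathcal{C}_b(\Omega)$ is continuous.
   Context: $\mathbb{K}\in\{\mathbb{R},\mathbb{C}\}$. $\mathcal{CW}(\Omega)$: continuous $\mathbb{K}$-valued functions with the topology of uniform convergence on compact subsets; $\mathcal{C}_b(\Omega)$: bounded continuous $\mathbb{K}$-valued functions with the topology of uniform convergence on $\Omega$. A completely regular space $\Omega$ is a $k_{\mathbb{R}}$-space if every map from $\Omega$ into a completely regular space whose restriction to each compact subset is continuous is continuous. $\mathcal{FV}(\Omega)'_\gamma$: dual with the topology of uniform convergence on precompact subsets. $(\delta_x\circ T)(f):=T(f)(x)$. Framework: $J,M$ non-empty index sets, $(\omega_m)_{m\in M}$ non-empty sets, $\nu_{j,m}\colon\omega_m\to[0,\infty)$ such that for all $m$, $x\in\omega_m$ some $\nu_{j,m}(x)>0$; $\operatorname{AP}(\Omega)\subset\mathbb{K}^\Omega$ a linear subspace; $T_m\colon\operatorname{dom}T_m\to\mathbb{K}^{\omega_m}$ linear maps on linear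 subspaces of $\mathbb{K}^\Omega$; $\mathcal{FV}(\Omega):=\{f\in\operatorname{AP}(\Omega)\cap\bigcap_m\operatorname{dom}T_m: |f|_{j,m}:=\sup_{x\in\omega_m}|T_m(f)(x)|\nu_{j,m}(x)<\infty\ \forall j,m\}$ with these seminorms. It is a dom-space if it is Hausdorff, the seminorms are directed and every $\delta_x\colon f\mapsto f(x)$ belongs to $\mathcal{FV}(\Omega)'$. *)

From Stdlib Require List.
From HB Require Import structures.
From mathcomp Require Import all_boot all_algebra all_classical all_reals all_analysis.
From mathcomp Require Import complex.
Set Implicit Arguments. Unset Strict Implicit. Unset Printing Implicit Defensive.
Import GRing.Theory Num.Theory numFieldTopology.Exports numFieldNormedType.Exports.
Local Open Scope ring_scope.
Local Open Scope classical_set_scope.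

(** The scalar field: [KK R true] is the real field R, [KK R false] is the
    complex field R[i] (i.e. 𝕂 ∈ {ℝ, ℂ}). *)
Definition KK (R : realType) (b : bool) : numFieldType :=
  if b then (R : numFieldType) else (R[i] : numFieldType).

(** The maps T_m
    are represented as total functions, only their values on dom T_m matter. *)
Unset Implicit Arguments.
Record FVdata (K : numFieldType) (Omega : Type) := FVData {
  fv_J : Type;
  fv_M : Type;
  fv_om : fv_M -> Type;
  fv_nu : fv_J -> forall m : fv_M, fv_om m -> K;
  fv_AP : set (Omega -> K);
  fv_dom : fv_M -> set (Omega -> K);
  fv_T : forall m : fv_M, (Omega -> K) -> fv_om m -> K }.
Arguments fv_J {K Omega} _ : assert.
Arguments fv_M {K Omega} _ : assert.
Arguments fv_om {K Omega} _ m : assert.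
Arguments fv_nu {K Omega} _ j m x : assert.
Arguments fv_AP {K Omega} _ _ : assert.
Arguments fv_dom {K Omega} _ m _ : assert.
Arguments fv_T {K Omega} _ m f x : assert.
Set Implicit Arguments.

Section FV.
Variables (K : numFieldType) (Omega : Type) (D : FVdata K Omega).

Definition lin_subspace (S : set (Omega -> K)) :=
  S (fun _ => 0) /\
  forall (a : K) f g, S f -> S g -> S (fun y => a * f y + g y).

Definition framework :=
  inhabited (fv_J D) /\ inhabited (fv_M D) /\
  (forall m, inhabited (fv_om D m)) /\
  (forall j m x, 0 <= fv_nu D j m x) /\
  (forall m x, exists j, 0 < fv_nu D j m x) /\
  lin_subspace (fv_AP D) /\
  (forall m, lin_subspace (fv_dom D m)) /\
  (forall m (a : K) f g, fv_dom D m f -> fv_dom D m g ->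
     fv_T D m (fun y => a * f y + g y) = (fun x => a * fv_T D m f x + fv_T D m g x)).

(** [snle j m f c] : |f|_{j,m} = sup_{x ∈ ω_m} |T_m(f)(x)| ν_{j,m}(x) <= c. *)
Definition snle (j : fv_J D) (m : fv_M D) (f : Omega -> K) (c : K) :=
  forall x : fv_om D m, `|fv_T D m f x| * fv_nu D j m x <= c.

Definition FV : set (Omega -> K) :=
  [set f | fv_AP D f /\ (forall m, fv_dom D m f) /\
           (forall j m, exists c : K, snle j m f c)].

Definition fsub (f g : Omega -> K) : Omega -> K := fun y => f y - g y.

(** [lc_nbhs f0 P] : P holds on a neighbourhood of f0 in FV(Ω) for the
    locally convex topology induced by the seminorms |.|_{j,m}; the basic
    neighbourhoods are finite intersections of seminorm balls. *)
Definition lc_nbhs (f0 : Omega -> K) (P : (Omega -> K) -> Prop) :=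
  exists (s : seq (fv_J D * fv_M D)) (d : K), 0 < d /\
    forall f, FV f -> (forall p, Stdlib.Lists.List.In p s -> snle p.1 p.2 (fsub f f0) d) -> P f.

Definition lc_continuous (phi : (Omega -> K) -> K) :=
  forall f0, FV f0 -> forall e : K, 0 < e ->
    lc_nbhs f0 (fun f => `|phi f - phi f0| <= e).

Definition is_linear_on (phi : (Omega -> K) -> K) :=
  forall (a : K) f g, FV f -> FV g -> phi (fun y => a * f y + g y) = a * phi f + phi g.

Definition dom_space :=
  (forall f, FV f -> (forall j m, snle j m f 0) -> f = (fun _ => 0)) /\
  (forall j1 m1 j2 m2, exists j3 m3 (C : K), 0 < C /\
     forall f, FV f -> forall c, snle j3 m3 f c ->
       snle j1 m1 f (C * c) /\ snle j2 m2 f (C * c)) /\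
  (forall x : Omega, is_linear_on (fun f => f x) /\ lc_continuous (fun f => f x)).

Definition fv_precompact (B : set (Omega -> K)) :=
  B `<=` FV /\
  forall (s : seq (fv_J D * fv_M D)) (d : K), 0 < d ->
    exists F : seq (Omega -> K), (forall g, Stdlib.Lists.List.In g F -> FV g) /\
      forall b, B b -> exists g, Stdlib.Lists.List.In g F /\
        forall p, Stdlib.Lists.List.In p s -> snle p.1 p.2 (fsub b g) d.

End FV.

Definition kR_space (R : realType) (Omega : topologicalType) :=
  completely_regular_space Omega /\
  forall (Y : topologicalType), completely_regular_space Y ->
    forall f : Omega -> Y,
      (forall C : set Omega, compact C -> {within C, continuous f}) ->
      continuous f.

From HB Require Import structures.
From mathcomp Require Import all_boot all_algebra all_classical all_reals all_analysis.
From mathcomp Require Import complex ring.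
Import mathcomp.order.order.Order.TTheory GRing.Theory Num.Theory numFieldTopology.Exports numFieldNormedType.Exports.
Set Implicit Arguments. Unset Strict Implicit. Unset Printing Implicit Defensive.
Local Open Scope ring_scope.
Local Open Scope classical_set_scope.

(* Each [δ_x ∘ T] is continuous because [T] is continuous into a topology
   finer than pointwise convergence.  For a precompact [B], pick a seminorm
   neighbourhood [U] of 0 that [T] maps into the [e/3]-ball of the supremum
   norm (on Ω in case (ii), on a compact [C] in case (i)) and cover [B] by
   finitely many translates [g + U]; continuity of the finitely many [T g]
   makes [{T f | f ∈ B}] equicontinuous (on [C]).  This is continuity of
   [x ↦ δ_x ∘ T] for uniform convergence on [B]; in case (i) it holds on each
   compact set, and the k_R-property upgrades it to continuity on Ω, the
   space of functions with uniform convergence on [B] being completely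
   regular. *)

Definition linear_on (K : numFieldType) (U V : Type) (S : set (U -> K))
    (h : (U -> K) -> V -> K) :=
  forall (a : K) f g, S f -> S g ->
    h (fun y => a * f y + g y) = (fun x => a * h f x + h g x).

Section LinearOn.
Variables (K : numFieldType) (U V : Type) (S : set (U -> K)).
Variable h : (U -> K) -> V -> K.
Hypotheses (S0 : S (fun _ => 0)) (h_lin : linear_on S h).

Lemma linear_on0 : h (fun _ => 0) = (fun _ => 0).
Proof.
apply: funext => x; have := congr1 (fun k => k x) (h_lin 1 S0 S0).
have -> : (fun _ : U => 1 * 0 + 0) = (fun _ => 0 : K).
  by apply: funext => y; rewrite mul1r addr0.
by rewrite /= mul1r => /(congr1 (fun k => k - h (fun _ => 0) x)); rewrite subrr addrK.
Qed.

Lemma fsubE (f g : U -> K) : fsub f g = (fun y => -1 * g y + f y).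
Proof. by apply: funext => y; rewrite /fsub mulN1r addrC. Qed.

Lemma linear_on_sub f g : S f -> S g -> h (fsub f g) = (fun x => h f x - h g x).
Proof.
by move=> Sf Sg; rewrite fsubE h_lin //; apply: funext => x; rewrite mulN1r addrC.
Qed.

End LinearOn.

Lemma fsubr0 (K : numFieldType) (U : Type) (f : U -> K) : fsub f (fun _ => 0) = f.
Proof. by apply: funext => y; rewrite /fsub subr0. Qed.

Section FVSpace.
Variables (K : numFieldType) (Omega : Type) (D : FVdata K Omega).
Hypothesis HD : framework D.

Lemma FV0 : FV D (fun _ => 0).
Proof.
have [_ [_ [_ [_ [_ [[AP0 _] [dom_sub T_lin]]]]]]] := HD.
split=> //; split=> [m|j m]; first by case: (dom_sub m).
exists 0 => x; rewrite (linear_on0 (proj1 (dom_sub m)) (T_lin m)).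
by rewrite normr0 mul0r.
Qed.

Lemma FV_comb (a : K) f g : FV D f -> FV D g -> FV D (fun y => a * f y + g y).
Proof.
have [_ [_ [_ [nu_ge0 [_ [[_ AP_comb] [dom_sub T_lin]]]]]]] := HD.
move=> [APf [domf snf]] [APg [domg sng]].
split; first exact: AP_comb.
split=> [m|j m]; first exact: (proj2 (dom_sub m)).
have [c1 Hc1] := snf j m; have [c2 Hc2] := sng j m.
exists (`|a| * c1 + c2) => x; rewrite T_lin //.
apply: le_trans (ler_wpM2r (nu_ge0 _ _ _) (ler_normD _ _)) _.
rewrite normrM mulrDl -mulrA; apply: lerD; last exact: Hc2.
by apply: ler_wpM2l; [exact: normr_ge0 | exact: Hc1].
Qed.

Lemma FV_sub f g : FV D f -> FV D g -> FV D (fsub f g).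
Proof. by move=> FVf FVg; rewrite fsubE; apply: FV_comb. Qed.

Lemma lc_nbhsS f0 (P Q : (Omega -> K) -> Prop) :
  lc_nbhs D f0 P -> (forall f, FV D f -> P f -> Q f) -> lc_nbhs D f0 Q.
Proof.
move=> [s [d [d_gt0 sdP]]] PQ; exists s, d; split=> // f FVf fs.
by apply: PQ => //; apply: sdP.
Qed.

End FVSpace.

Lemma near_forall_In (T : Type) (F : set_system T) (FF : Filter F) (I : Type)
    (s : seq I) (P : I -> T -> Prop) :
  (forall i, List.In i s -> \forall x \near F, P i x) ->
  \forall x \near F, forall i, List.In i s -> P i x.
Proof.
elim: s => [|i s IHs] Ps; first by apply: filterE => x i [].
apply: filterS2 (Ps i (or_introl erefl)) (IHs (fun j sj => Ps j (or_intror sj))).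
by move=> x Pix Psx j [<-|sj] //; exact: Psx.
Qed.

Section Equicontinuity.
Variables (K : numFieldType) (Omega : topologicalType) (D : FVdata K Omega).
Hypothesis HD : framework D.
Variable T : (Omega -> K) -> Omega -> K.
Hypotheses (T_lin : linear_on (FV D) T) (T_cont : forall f, FV D f -> continuous (T f)).

Lemma precompact_equicontinuous_on (A : set Omega) :
  (forall e : K, 0 < e -> lc_nbhs D (fun _ => 0)
     (fun f => forall x, A x -> `|T f x - T (fun _ => 0) x| <= e)) ->
  forall B, fv_precompact D B -> forall e : K, 0 < e -> forall x0, A x0 ->
  \forall x \near x0, A x -> forall f, B f -> `|T f x - T f x0| <= e.
Proof.
move=> T_small B [B_FV B_net] e e_gt0 x0 Ax0.
have e3_gt0 : 0 < e / 3 by rewrite divr_gt0 // ltr0n.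
have [s [d [d_gt0 sdT]]] := T_small _ e3_gt0.
have [G [G_FV G_net]] := B_net s d d_gt0.
have near_G : \forall x \near x0, forall g, List.In g G -> `|T g x0 - T g x| <= e / 3.
  apply: near_forall_In => g Gg.
  exact: (cvgr_dist_le _ _ (@T_cont g (G_FV g Gg) x0) _ e3_gt0).
apply: filterS near_G => x near_Gx Ax f Bf.
have [g [Gg fg]] := G_net f Bf.
have FVf := B_FV f Bf; have FVg := G_FV g Gg.
have FVfg : FV D (fsub f g) := FV_sub HD FVf FVg.
have T_fg y : A y -> `|T f y - T g y| <= e / 3.
  move=> Ay; have := sdT _ FVfg _ y Ay.
  rewrite (linear_on0 (FV0 HD) T_lin) subr0 (linear_on_sub T_lin) //; apply.
  by move=> p sp; rewrite fsubr0; apply: fg.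
have -> : T f x - T f x0 = (T f x - T g x) - (T f x0 - T g x0) + (T g x - T g x0)
  by ring.
have -> : e = e / 3 + e / 3 + e / 3 by field.
apply: le_trans (ler_normD _ _) _; apply: lerD; last by rewrite distrC near_Gx.
apply: le_trans (ler_normB _ _) _.
by apply: lerD; apply: T_fg.
Qed.

End Equicontinuity.

Section UniformFamily.
Variables (K : numFieldType) (Omega : topologicalType) (I : choiceType).
Variables (B : set I) (F : I -> Omega -> K).

Definition eval_family (x : Omega) : {uniform` B -> K} := fun i => F i x.

Lemma equicontinuous_within_eval_family (C : set Omega) :
  (forall e : K, 0 < e -> forall x0, C x0 ->
     \forall x \near x0, C x -> forall i, B i -> `|F i x - F i x0| <= e) ->
  {within C, continuous eval_family}.
Proof.
move=> equi; apply/subspace_continuousP => x0 Cx0 P /uniform_nbhs [E [entE EP]].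
rewrite -entourage_ballE in entE; case: entE => eps eps_gt0 epsE.
have eps2_gt0 : 0 < eps / 2 by rewrite divr_gt0 // ltr0n.
apply: filterS (equi _ eps2_gt0 _ Cx0) => x near_x Cx.
apply: EP => i Bi; apply: epsE; rewrite /= -ball_normE /= distrC.
apply: le_lt_trans (near_x Cx i Bi) _.
by rewrite ltr_pdivrMr ?ltr0n // ltr_pMr ?ltr1n.
Qed.

Lemma continuous_eval_family_equicontinuous : continuous eval_family ->
  forall e : K, 0 < e -> forall x0,
  \forall x \near x0, forall i, B i -> `|F i x - F i x0| <= e.
Proof.
move=> cont e e_gt0 x0.
have near_x0 : nbhs (eval_family x0)
    [set h : {uniform` B -> K} | forall i, B i -> `|h i - F i x0| <= e].
  apply/uniform_nbhs; exists [set xy | ball xy.1 e xy.2]; split.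
    by rewrite -entourage_ballE; exists e.
  by move=> h ball_h i Bi; have := ball_h i Bi; rewrite -ball_normE /= distrC => /ltW.
exact: cont x0 _ near_x0.
Qed.

Lemma kR_space_equicontinuous (R : realType) : kR_space R Omega ->
  (forall C, compact C -> forall e : K, 0 < e -> forall x0, C x0 ->
     \forall x \near x0, C x -> forall i, B i -> `|F i x - F i x0| <= e) ->
  forall e : K, 0 < e -> forall x0,
  \forall x \near x0, forall i, B i -> `|F i x - F i x0| <= e.
Proof.
move=> [_ kR] equi; apply: continuous_eval_family_equicontinuous.
apply: kR; first exact: uniform_completely_regular.
by move=> C cC; apply: equicontinuous_within_eval_family; apply: equi.
Qed.

End UniformFamily.

Theorem lemma4p2 (R : realType) (b : bool) (Omega : topologicalType)
  (D : FVdata (KK R b) Omega)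
  (T : (Omega -> KK R b) -> (Omega -> KK R b)) :
  hausdorff_space Omega ->
  framework D -> dom_space D ->
  (* T : FV(Ω) -> C(Ω) linear *)
  (forall (a : KK R b) f g, FV D f -> FV D g ->
     T (fun y => a * f y + g y) = (fun x => a * T f x + T g x)) ->
  (forall f, FV D f -> continuous (T f)) ->
  ( (* (i) *)
    (kR_space R Omega /\
     forall f0, FV D f0 -> forall C : set Omega, compact C ->
       forall e : KK R b, 0 < e ->
         lc_nbhs D f0 (fun f => forall x, C x -> `|T f x - T f0 x| <= e))
  \/ (* (ii) *)
    ((forall f, FV D f -> exists c : KK R b, forall x, `|T f x| <= c) /\
     forall f0, FV D f0 -> forall e : KK R b, 0 < e ->
       lc_nbhs D f0 (fun f => forall x, `|T f x - T f0 x| <= e)) ) ->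
  (* δ_x ∘ T ∈ FV(Ω)' for every x *)
  (forall x : Omega,
     is_linear_on D (fun f => T f x) /\ lc_continuous D (fun f => T f x)) /\
  (* x ↦ δ_x ∘ T is continuous into FV(Ω)'_γ *)
  (forall B, fv_precompact D B -> forall e : KK R b, 0 < e ->
     forall x0 : Omega, \forall x \near x0, forall f, B f -> `|T f x - T f x0| <= e).
Proof.
move=> _ HD _ T_lin T_cont cases.
have equi := precompact_equicontinuous_on HD T_lin T_cont.
split=> [x|B B_pc e e_gt0 x0].
  split=> [a f g FVf FVg|f0 FVf0 e e_gt0]; first by rewrite T_lin.
  case: cases => [[_ T_cont_C]|[_ T_cont_sup]].
    apply: lc_nbhsS (T_cont_C f0 FVf0 [set x] (@compact_set1 _ x) e e_gt0) _.
    by move=> f _; apply.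
  by apply: lc_nbhsS (T_cont_sup f0 FVf0 e e_gt0) _ => f _; apply.
case: cases => [[kR T_cont_C]|[_ T_cont_sup]].
  apply: (kR_space_equicontinuous kR) e_gt0 x0 => C cC e' e'_gt0 x1 Cx1.
  have H := equi _ (T_cont_C _ (FV0 HD) C cC) B B_pc e' e'_gt0 x1 Cx1.
  by apply: filterS H => x near_x Cx f Bf; apply: near_x.
have T_small e' : 0 < e' -> lc_nbhs D (fun _ => 0)
    (fun f => forall x, [set: Omega] x -> `|T f x - T (fun _ => 0) x| <= e').
  by move=> e'_gt0; apply: lc_nbhsS (T_cont_sup _ (FV0 HD) e' e'_gt0) _ => f _ T_f x _.
have := equi _ T_small B B_pc e e_gt0 x0 I.
by apply: filterS => x near_x f Bf; apply: near_x.
Qed.
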